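(* Let $M$ be a subset of the positive integers and $n\ge1$. Then for every $r\in\mathbb R$, $$E_n\Big(\exp\Big\{r\sum_{k\in M}p_{kn}\delta_{k0}(n)\Big\}\Big)\le\prod_{k\in M}\Big(\big(e^{rp_{kn}}-1\big)(1-p_{kn})^n+1\Big),$$ and for every $j\ge1$, $$E_n\Big(\exp\Big\{r\sum_{k\in M}\big(\delta_{k0}(n)+\delta_{k1}(n)+\cdots+\delta_{kj}(n)\big)\Big\}\Big)\le\prod_{k\in M}\Big(\big(e^r-1\big)\sum_{l=0}^j\frac{n!}{(n-l)!\,l!}p_{kn}^l(1-p_{kn})^{n-l}+1\Big).$$
   Context: $p_n=(p_{kn})_{k\ge1}$ is a probability vector; under the probability $P_n$ (expectation $E_n$) a sample of size $n$ is drawn i.i.d. from countably many species, species $k$ being drawn with probability $p_{kn}$; $X_k(n)$ is the number of times species $k$ appears in the sample, and $\delta_{kj}(n)=I_{\{X_k(n)=j\}}$. *)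

From HB Require Import structures.
From mathcomp Require Import all_boot all_order all_algebra.
From mathcomp Require Import all_classical all_reals all_analysis.
Set Implicit Arguments. Unset Strict Implicit. Unset Printing Implicit Defensive.
Import Order.TTheory GRing.Theory Num.Theory.
Local Open Scope classical_set_scope.
Local Open Scope ring_scope.

(* Species are labelled by k : nat (species k of the paper = label k-1 here).  A sample of size n is a finite function s : 'I_n -> nat,
   s i being the species of the i-th draw. *)

Definition Xcount (n : nat) (s : {ffun 'I_n -> nat}) (k : nat) : nat :=
  #|[set i : 'I_n | s i == k]|.

Definition delta {R : realType} (n : nat) (s : {ffun 'I_n -> nat}) (k j : nat) : R :=
  (Xcount s k == j)%:R.

Definition sample_prob {R : realType} (p : nat -> R) (n : nat)
  (s : {ffun 'I_n -> nat}) : R := \prod_(i < n) p (s i).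

Definition En {R : realType} (p : nat -> R) (n : nat)
  (F : {ffun 'I_n -> nat} -> \bar R) : \bar R :=
  (\esum_(s in [set: {ffun 'I_n -> nat}]) (sample_prob p s)%:E * F s)%E.

Definition prod_over {R : realType} (M : set nat) (a : nat -> R) : \bar R :=
  limn (fun N => (\prod_(k < N | (k : nat) \in M) a k)%:E).

From mathcomp Require Import all_boot all_order all_algebra.
From mathcomp Require Import all_classical all_reals all_analysis.
From mathcomp Require Import ring lra.
Import Order.TTheory GRing.Theory Num.Theory numFieldNormedType.Exports.
Local Open Scope classical_set_scope.
Local Open Scope ring_scope.

(** Conditioning on the first draw x, which equals k with probability p_k, gives
      E_{n+1} [prod_k h_k(X_k)] = sum_x p_x E_n [prod_k h_k(1{x = k} + X_k)].
    If all h_k are monotone in the same direction, the indicators 1{x = k} of a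
    single draw are negatively correlated against such products, so, bounding the
    inner expectations inductively by binomial means, the right-hand side is at most
    prod_k E h_k(Y_k) with Y_k ~ Binomial(n+1, p_k).  This bounds the products over
    M restricted to [0, N).  For h_k(x) = exp(r w_k 1{x <= j}) the bounds are
    monotone in N and the left-hand sides converge pointwise, so Fatou's lemma passes
    to all of M; finally E exp(c 1{Y <= j}) = (e^c - 1) P(Y <= j) + 1. *)

Section BinomialMean.
Context {R : realType}.
Implicit Types (q c : R) (g h : nat -> R).

(* [binom_mean q n g] is E g(Y) for Y ~ Binomial(n, q), conditioning on the first trial. *)
Fixpoint binom_mean q n g : R :=
  if n is n'.+1 then q * binom_mean q n' (fun x => g x.+1) + (1 - q) * binom_mean q n' g
  else g 0%N.

Lemma eq_binom_mean q n g h : g =1 h -> binom_mean q n g = binom_mean q n h.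
Proof. by move=> /boolp.funext ->. Qed.

Lemma binom_mean_lin q n a c g h :
  binom_mean q n (fun x => a * g x + c * h x) = a * binom_mean q n g + c * binom_mean q n h.
Proof.
elim: n g h => [|n IH] g h //=.
by rewrite (IH (fun x => g x.+1) (fun x => h x.+1)) IH; ring.
Qed.

Lemma binom_mean_cst q n c : binom_mean q n (fun=> c) = c.
Proof. by elim: n => [|n IH] //=; rewrite IH; ring. Qed.

Lemma binom_mean_ge0 q n g :
  0 <= q <= 1 -> (forall x, 0 <= g x) -> 0 <= binom_mean q n g.
Proof.
move=> /andP[q_ge0 q_le1]; elim: n g => [|n IH] g g_ge0 //=.
by rewrite addr_ge0 ?mulr_ge0 ?IH ?subr_ge0.
Qed.

Lemma binom_mean_le q n g h : 0 <= q <= 1 -> (forall x, g x <= h x) ->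
  binom_mean q n g <= binom_mean q n h.
Proof.
move=> q01 le_gh; rewrite -subr_ge0.
have -> : binom_mean q n h - binom_mean q n g =
          1 * binom_mean q n h + (-1) * binom_mean q n g by ring.
by rewrite -binom_mean_lin; apply: binom_mean_ge0 => // x; rewrite mul1r mulN1r subr_ge0.
Qed.

Lemma binom_meanE q n g :
  binom_mean q n g = \sum_(l < n.+1) 'C(n, l)%:R * q ^+ l * (1 - q) ^+ (n - l) * g l.
Proof.
elim: n g => [|n IH] g /=; first by rewrite big_ord1 bin0 !expr0 !mul1r.
rewrite !IH [RHS]big_ord_recl bin0 subn0 expr0 !mul1r.
under [X in _ = _ + X]eq_bigr do rewrite lift0 binS subSS natrD !mulrDl.
rewrite big_split /= [RHS]addrA [RHS]addrC mulr_sumr; congr (_ + _).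
  by apply: eq_bigr => l _; rewrite exprS; ring.
rewrite big_ord_recl bin0 subn0 expr0 !mul1r [X in _ = _ + X]big_ord_recr /=.
rewrite bin_small // !mul0r addr0 exprS mulrDr mulr_sumr; congr (_ + _); first ring.
apply: eq_bigr => l _.
by rewrite /bump leq0n add1n -(subnSK (ltn_ord l)) [(1 - q) ^+ _.+1]exprS; ring.
Qed.

Lemma binom_mean_leq q n j : binom_mean q n (fun x => (x <= j)%:R) =
  \sum_(l < j.+1) 'C(n, l)%:R * q ^+ l * (1 - q) ^+ (n - l).
Proof.
pose w l := 'C(n, l)%:R * q ^+ l * (1 - q) ^+ (n - l).
rewrite binom_meanE (big_ord_widen (n.+1 + j.+1) (fun l => w l * (l <= j)%:R)) ?leq_addr //.
rewrite [RHS](big_ord_widen (n.+1 + j.+1) w) ?leq_addl // big_mkcond [RHS]big_mkcond /=.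
apply: eq_bigr => l _; rewrite !ltnS; case: leqP => [_|lt_n_l].
  by case: (l <= j)%N; rewrite ?mulr1 ?mulr0.
by rewrite /w bin_small // !mul0r if_same.
Qed.

Lemma binom_mean_exp_ind q n c (b : pred nat) :
  binom_mean q n (fun x => expR (c * (b x)%:R)) =
  (expR c - 1) * binom_mean q n (fun x => (b x)%:R) + 1.
Proof.
rewrite -[X in _ + X](binom_mean_cst q n 1) -[X in _ + X]mul1r -binom_mean_lin.
by apply: eq_binom_mean => x; case: (b x); rewrite ?mulr1 ?mulr0 ?expR0; ring.
Qed.

End BinomialMean.

Section OneDrawCorrelation.
Context {R : realType}.
Variables (p A A' : nat -> R).
Hypothesis p_ge0 : forall k, 0 <= p k.
Hypothesis A_ge0 : forall k, 0 <= A k.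
Hypothesis mix_ge0 : forall k, 0 <= p k * A' k + (1 - p k) * A k.
Hypothesis comonotone : forall k l, 0 <= (A' k - A k) * (A' l - A l).

Let B x k := if k == x then A' k else A k.

Let excess (S : seq nat) :=
  \sum_(x <- S) p x * (\prod_(k <- S) B x k - \prod_(k <- S) A k).

Let prod_B_notin x S : x \notin S -> \prod_(k <- S) B x k = \prod_(k <- S) A k.
Proof.
move=> xS; rewrite big_seq [RHS]big_seq; apply: eq_bigr => k kS.
by rewrite /B; case: eqP => // kx; move: xS; rewrite -kx kS.
Qed.

Let excess_cons a S : a \notin S ->
  excess (a :: S) = p a * (A' a - A a) * \prod_(k <- S) A k + A a * excess S.
Proof.
move=> aS; rewrite /excess !big_cons {1}/B eqxx prod_B_notin // mulr_sumr.
congr (_ + _); first ring.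
rewrite big_seq [RHS]big_seq; apply: eq_bigr => x xS.
have ax : (a == x) = false by apply: contraNF aS => /eqP ->.
by rewrite big_cons {1}/B ax; ring.
Qed.

(* The recursion [excess_cons] only involves products of increments A' - A, which all
   have the same sign. *)
Let excess_comonotone a S : uniq S -> 0 <= (A' a - A a) * excess S.
Proof.
elim: S => [_|b S IH /= /andP[bS uS]]; first by rewrite /excess big_nil mulr0.
rewrite excess_cons // mulrDr.
have -> : (A' a - A a) * (p b * (A' b - A b) * \prod_(k <- S) A k) =
          p b * \prod_(k <- S) A k * ((A' a - A a) * (A' b - A b)) by ring.
rewrite [X in _ + X]mulrCA; apply: addr_ge0; apply: mulr_ge0; rewrite ?IH //.
by rewrite mulr_ge0 ?prodr_ge0.
Qed.

Lemma one_draw_prod_le S : uniq S ->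
  \sum_(x <- S) p x * \prod_(k <- S) (if k == x then A' k else A k)
    + (1 - \sum_(x <- S) p x) * \prod_(k <- S) A k
  <= \prod_(k <- S) (p k * A' k + (1 - p k) * A k).
Proof.
move=> uS.
have -> : \sum_(x <- S) p x * \prod_(k <- S) B x k
    + (1 - \sum_(x <- S) p x) * \prod_(k <- S) A k = \prod_(k <- S) A k + excess S.
  rewrite /excess; under [X in _ = _ + X]eq_bigr do rewrite mulrBr.
  by rewrite sumrB -mulr_suml; ring.
elim: S uS => [_|a S IH /= /andP[aS uS]]; first by rewrite /excess !big_nil addr0.
rewrite excess_cons // !big_cons.
have -> : A a * \prod_(k <- S) A k + (p a * (A' a - A a) * \prod_(k <- S) A k + A a * excess S)
  = (p a * A' a + (1 - p a) * A a) * (\prod_(k <- S) A k + excess S)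
    - p a * ((A' a - A a) * excess S) by ring.
apply: le_trans (ler_wpM2l (mix_ge0 a) (IH uS)).
by rewrite gerBl mulr_ge0 ?excess_comonotone.
Qed.

End OneDrawCorrelation.

Section SampleExpectation.
Context {R : realType}.
Local Open Scope ereal_scope.

Lemma esumZl (T : choiceType) (I : set T) (c : R) (a : T -> \bar R) :
  (0 <= c)%R -> (forall i, 0 <= a i) ->
  \esum_(i in I) (c%:E * a i) = c%:E * \esum_(i in I) a i.
Proof.
move=> c_ge0 a_ge0; rewrite /esum -ereal_supZl //; last first.
  by apply/set0P; exists 0; exists set0; [exact: fsets_set0 | rewrite fsbig_set0].
congr ereal_sup; apply/seteqP; split => x /=.
  by move=> [X XI <-]; exists (\sum_(i \in X) a i); [exists X | rewrite ge0_mule_fsumr].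
by move=> [y [X XI <-] <-]; exists X => //; rewrite ge0_mule_fsumr.
Qed.

Definition fcons {n} (x : nat) (t : {ffun 'I_n -> nat}) : {ffun 'I_n.+1 -> nat} :=
  [ffun i => if unlift ord0 i is Some j then t j else x].

Lemma fcons0 {n} x (t : {ffun 'I_n -> nat}) : fcons x t ord0 = x.
Proof. by rewrite ffunE unlift_none. Qed.

Lemma fconsS {n} x (t : {ffun 'I_n -> nat}) j : fcons x t (lift ord0 j) = t j.
Proof. by rewrite ffunE liftK. Qed.

Lemma fcons_bij n : set_bij [set: nat * {ffun 'I_n -> nat}] [set: {ffun 'I_n.+1 -> nat}]
  (fun xt => fcons xt.1 xt.2).
Proof.
split=> [// | [x t] [y u] _ _ /= e | s _].
- have -> : x = y by rewrite -(fcons0 x t) e fcons0.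
  by congr pair; apply/ffunP => j; rewrite -(fconsS x t) e fconsS.
- exists (s ord0, [ffun j => s (lift ord0 j)]) => //=.
  by apply/ffunP => i; rewrite ffunE; case: unliftP => [j ->|->] //; rewrite ffunE.
Qed.

Lemma Xcount_sum n (s : {ffun 'I_n -> nat}) k : Xcount s k = (\sum_(i < n) (s i == k))%N.
Proof.
rewrite /Xcount -sum1_card big_mkcond; apply: eq_bigr => i _.
have -> : (i \in [set i | s i == k]) = (s i == k) by apply/idP/idP => [/set_mem | /mem_set].
by case: eqP.
Qed.

Lemma Xcount_fcons n x (t : {ffun 'I_n -> nat}) k :
  Xcount (fcons x t) k = ((x == k) + Xcount t k)%N.
Proof.
rewrite !Xcount_sum big_ord_recl fcons0; congr addn.
by apply: eq_bigr => i _; rewrite fconsS.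
Qed.

Variables (p : nat -> R).
Hypothesis p_ge0 : forall k, (0 <= p k)%R.

Lemma sample_prob_fcons n x (t : {ffun 'I_n -> nat}) :
  sample_prob p (fcons x t) = (p x * sample_prob p t)%R.
Proof.
rewrite /sample_prob big_ord_recl fcons0; congr (_ * _)%R.
by apply: eq_bigr => i _; rewrite fconsS.
Qed.

Lemma sample_prob_ge0 n (s : {ffun 'I_n -> nat}) : (0 <= sample_prob p s)%R.
Proof. exact: prodr_ge0. Qed.

Lemma En_ord0 (F : {ffun 'I_0 -> nat} -> \bar R) (s0 : {ffun 'I_0 -> nat}) :
  0 <= F s0 -> En p F = F s0.
Proof.
move=> F_ge0; rewrite /En; have -> : [set: {ffun 'I_0 -> nat}] = [set s0].
  by apply/seteqP; split => s // _; apply/ffunP => -[].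
by rewrite esum_set1 /sample_prob big_ord0 mul1e.
Qed.

Lemma En_fcons n (F : {ffun 'I_n.+1 -> nat} -> \bar R) : (forall s, 0 <= F s) ->
  En p F = \esum_(x in [set: nat]) (p x)%:E * En p (fun t => F (fcons x t)).
Proof.
move=> F_ge0; rewrite /En.
transitivity (\esum_(x in [set: nat]) \esum_(t in [set: {ffun 'I_n -> nat}])
   ((sample_prob p (fcons x t))%:E * F (fcons x t))); last first.
  apply: eq_esum => x _; rewrite -esumZl //; last first.
    by move=> t; rewrite mule_ge0 // lee_fin sample_prob_ge0.
  by apply: eq_esum => t _; rewrite sample_prob_fcons EFinM muleA.
rewrite esum_esum => [|x t _ _]; last by rewrite mule_ge0 // lee_fin sample_prob_ge0.
have -> : [set: nat] `*`` (fun=> [set: {ffun 'I_n -> nat}]) = setT.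
  by apply/seteqP; split.
exact: reindex_esum (fcons_bij n).
Qed.

End SampleExpectation.

Section ProductBound.
Context {R : realType}.
Variable p : nat -> R.
Hypothesis p_ge0 : forall k, 0 <= p k.
Hypothesis p_sum1 : (\esum_(k in [set: nat]) (p k)%:E = 1)%E.

Lemma p01 k : 0 <= p k <= 1.
Proof.
rewrite p_ge0 -lee_fin -p_sum1; apply: esum_ge; exists [set k]; last by rewrite fsbig_set1.
by split => //; exact: finite_set1.
Qed.

Lemma esum_setT_seq (a : nat -> \bar R) (S : seq nat) : uniq S -> (forall x, 0 <= a x)%E ->
  (\esum_(x in [set: nat]) a x = \sum_(x <- S) a x + \esum_(x in ~` [set` S]) a x)%E.
Proof.
move=> uS a_ge0; rewrite (esumID [set` S]) // !setTI esum_fset.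
- by rewrite -fsbig_seq.
- exact: finite_seq.
- by move=> x _.
Qed.

Lemma esum_mulp_cst_off (G : nat -> R) (S : seq nat) (c : R) : uniq S ->
  (forall x, 0 <= G x) -> 0 <= c -> (forall x, x \notin S -> G x = c) ->
  (\esum_(x in [set: nat]) ((p x)%:E * (G x)%:E) =
   (\sum_(x <- S) p x * G x + (1 - \sum_(x <- S) p x) * c)%:E)%E.
Proof.
move=> uS G_ge0 c_ge0 G_off.
have mass_off : (\esum_(x in ~` [set` S]) (p x)%:E = (1 - \sum_(x <- S) p x)%:E)%E.
  move: (esum_setT_seq (fun x => (p x)%:E) S uS p_ge0); rewrite p_sum1 sumEFin.
  by case: (\esum_(x in _) _)%E => // m /eqP; rewrite eqe => /eqP ->; congr EFin; ring.
rewrite (esum_setT_seq _ S uS) => [|x]; last by rewrite -EFinM lee_fin mulr_ge0.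
rewrite (_ : \esum_(x in ~` [set` S]) _ = c%:E * \esum_(x in ~` [set` S]) (p x)%:E)%E.
  by rewrite mass_off -!EFinM sumEFin -EFinD mulrC.
rewrite -esumZl => [||x]; [|exact: c_ge0|by rewrite lee_fin].
by apply: eq_esum => x /= xS; rewrite muleC G_off //; apply/negP.
Qed.

Lemma esum_first_draw_le (sg : R) n (f : nat -> nat -> R) (S : seq nat) :
  sg ^+ 2 = 1 -> uniq S -> (forall k x, 0 <= f k x) ->
  (forall k x, 0 <= sg * (f k x.+1 - f k x)) ->
  (\esum_(x in [set: nat]) ((p x)%:E *
     (\prod_(k <- S) binom_mean (p k) n (fun y => f k ((x == k) + y)%N))%:E)
   <= (\prod_(k <- S) binom_mean (p k) n.+1 (f k))%:E)%E.
Proof.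
move=> sg2 uS f_ge0 f_mono.
pose A k := binom_mean (p k) n (f k).
pose A' k := binom_mean (p k) n (fun y => f k y.+1).
have meanE x k : binom_mean (p k) n (fun y => f k ((x == k) + y)%N) =
                 if k == x then A' k else A k.
  by rewrite eq_sym; case: eqP => _; apply: eq_binom_mean.
have mean_ge0 k g : (forall y, 0 <= g y) -> 0 <= binom_mean (p k) n g.
  exact: binom_mean_ge0 _ _ _ (p01 k).
have mix_ge0 k : 0 <= p k * A' k + (1 - p k) * A k :=
  binom_mean_ge0 (p k) n.+1 (f k) (p01 k) (f_ge0 k).
have sgA k : 0 <= sg * (A' k - A k).
  have -> : sg * (A' k - A k) = sg * A' k + (- sg) * A k by ring.
  by rewrite -binom_mean_lin; apply: mean_ge0 => y; rewrite mulNr -mulrBr.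
have comonotone k l : 0 <= (A' k - A k) * (A' l - A l).
  by rewrite -[_ * _]mul1r -sg2 expr2 mulrACA mulr_ge0.
rewrite (esum_mulp_cst_off _ S (\prod_(k <- S) A k) uS) => [|x||x xS].
- have -> : \sum_(x <- S) p x *
              \prod_(k <- S) binom_mean (p k) n (fun y => f k ((x == k) + y)%N) =
            \sum_(x <- S) p x * \prod_(k <- S) (if k == x then A' k else A k).
    by apply: eq_bigr => x _; congr (_ * _); apply: eq_bigr => k _; exact: meanE.
  rewrite lee_fin; apply: one_draw_prod_le => // k.
  exact: mean_ge0.
- by apply: prodr_ge0 => k _; apply: mean_ge0.
- by apply: prodr_ge0 => k _; apply: mean_ge0.
- rewrite big_seq [RHS]big_seq; apply: eq_bigr => k kS; rewrite meanE.
  by case: eqP => // kx; move: xS; rewrite -kx kS.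
Qed.

Lemma En_prod_le (sg : R) n (f : nat -> nat -> R) (S : seq nat) :
  sg ^+ 2 = 1 -> uniq S -> (forall k x, 0 <= f k x) ->
  (forall k x, 0 <= sg * (f k x.+1 - f k x)) ->
  (En p (fun s : {ffun 'I_n -> nat} => (\prod_(k <- S) f k (Xcount s k))%:E)
    <= (\prod_(k <- S) binom_mean (p k) n (f k))%:E)%E.
Proof.
move=> sg2 uS; elim: n f => [|n IH] f f_ge0 f_mono.
  rewrite (En_ord0 _ _ [ffun=> 0%N]) ?lee_fin ?prodr_ge0 //.
  by under eq_bigr do rewrite Xcount_sum big_ord0.
rewrite (En_fcons _ p_ge0) => [|s]; last by rewrite lee_fin prodr_ge0.
apply: (le_trans _ (esum_first_draw_le _ _ _ _ sg2 uS f_ge0 f_mono)); apply: le_esum => x _.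
rewrite lee_wpmul2l ?lee_fin //.
have -> : (fun t : {ffun 'I_n -> nat} => (\prod_(k <- S) f k (Xcount (fcons x t) k))%:E) =
          (fun t => (\prod_(k <- S) f k ((x == k) + Xcount t k)%N)%:E).
  by apply: boolp.funext => t; under eq_bigr do rewrite Xcount_fcons.
by apply: (IH (fun k y => f k ((x == k) + y)%N)) => k y //; rewrite addnS.
Qed.
End ProductBound.

Section Limits.
Context {R : realType}.
Local Open Scope ereal_scope.

Lemma cvgn_expeR (y : nat -> R) (x : \bar R) :
  (y N)%:E @[N --> \oo] --> x -> (expR (y N))%:E @[N --> \oo] --> expeR x.
Proof.
case: x => [x /fine_cvgP[_ yx] | /cvgeyPge yoo | /cvgerNyP/cvgNry yNoo].
- apply/fine_cvgP; split; first exact: nearW.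
  exact: (continuous_cvg _ (@continuous_expR R x) yx).
- apply/cvgeyPge => A; apply: filterS (yoo A) => N /=; rewrite !lee_fin => AyN.
  by have := expR_ge1Dx (y N); lra.
- apply/fine_cvgP; split; first exact: nearW.
  suff -> : fine \o (fun N => (expR (y N))%:E) = (fun x => expR (- x)) \o (- y)%R.
    exact: cvg_comp yNoo (@cvgr_expR R).
  by apply/boolp.funext => N /=; rewrite opprK.
Qed.

Lemma esum_le_limn (T : choiceType) (I : set T) (G : nat -> T -> \bar R)
    (F : T -> \bar R) (u : nat -> \bar R) :
  (forall N t, 0 <= G N t) -> (forall t, G N t @[N --> \oo] --> F t) -> cvgn u ->
  (forall N, \esum_(t in I) G N t <= u N) -> \esum_(t in I) F t <= limn u.
Proof.
move=> G_ge0 GF cvg_u Gu; apply: ge_ereal_sup => _ [X [finX XI] <-].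
have cvgX : \sum_(t <- finmap.enum_fset (fset_set X)) G N t @[N --> \oo] -->
            \sum_(t <- finmap.enum_fset (fset_set X)) F t.
  by apply: cvg_nnesum => t _; [exact: nearW | exact: GF].
rewrite fsbig_finite // -(cvg_lim _ cvgX) //; apply: lee_lim => //; first exact: (cvgP _ cvgX).
apply: nearW => N; apply: le_trans (Gu N); apply: esum_ge; exists X => //.
by rewrite fsbig_finite.
Qed.

Lemma cvgn_prod_cond (a : nat -> R) (P : pred nat) : (forall k, 0 <= a k)%R ->
  (forall k, 1 <= a k)%R \/ (forall k, a k <= 1)%R ->
  cvgn (fun N => (\prod_(k < N | P k) a k)%:E).
Proof.
have prodS N : (\prod_(k < N.+1 | P k) a k = \prod_(k < N | P k) a k * (if P N then a N else 1))%R.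
  by rewrite big_mkcond big_ord_recr /= -big_mkcond.
move=> a_ge0 [a_ge1|a_le1].
- apply: ereal_nondecreasing_is_cvgn; apply/nondecreasing_seqP => N.
  by rewrite lee_fin prodS ler_peMr ?prodr_ge0 //; case: ifP.
- apply: ereal_nonincreasing_is_cvgn; apply/nonincreasing_seqP => N.
  by rewrite lee_fin prodS ler_piMr ?prodr_ge0 //; case: ifP.
Qed.

End Limits.

Section ExpCountBound.
Context {R : realType}.
Variable p : nat -> R.
Hypothesis p_ge0 : forall k, 0 <= p k.
Hypothesis p_sum1 : (\esum_(k in [set: nat]) (p k)%:E = 1)%E.
Variables (M : set nat) (n : nat) (r : R) (w : nat -> R) (b : pred nat).
Hypothesis w_ge0 : forall k, 0 <= w k.
Hypothesis b_down : forall x, b x.+1 -> b x.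

Let pk01 k : 0 <= p k <= 1 := p01 p p_ge0 p_sum1 k.
Let c k x := w k * (b x)%:R.
Let f k x := expR (r * c k x).
Let partial N := [seq k <- iota 0 N | k \in M].

Let f_mono k x : 0 <= (if 0 <= r then -1 else 1) * (f k x.+1 - f k x).
Proof.
rewrite /f /c; case: (boolP (b x.+1)) => [/b_down -> | _]; first by rewrite subrr mulr0.
rewrite mulr0 mulr0 expR0; case: (b x); last by rewrite mulr0 mulr0 expR0 subrr mulr0.
rewrite mulr1; case: ifPn => [r_ge0 | r_lt0].
  by rewrite mulN1r oppr_ge0 subr_le0 -expR0 ler_expR mulr_ge0.
by rewrite mul1r subr_ge0 -expR0 ler_expR mulr_le0_ge0 // ltW // ltNge.
Qed.

Let En_partial_le N :
  (En p (fun s : {ffun 'I_n -> nat} => (expR (r * \sum_(k <- partial N) c k (Xcount s k)))%:E)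
   <= (\prod_(k < N | (k : nat) \in M) binom_mean (p k) n (f k))%:E)%E.
Proof.
under eq_fun do rewrite mulr_sumr expR_sum.
rewrite -(big_mkord (fun k => k \in M) (fun k => binom_mean (p k) n (f k))).
rewrite /index_iota subn0 -big_filter.
apply: (En_prod_le _ p_ge0 p_sum1 _ n f (partial N) _ _ _ f_mono) => [||k x].
- by case: ifP; rewrite ?sqrrN expr1n.
- by rewrite filter_uniq ?iota_uniq.
- exact: expR_ge0.
Qed.

Let partial_cvg (s : {ffun 'I_n -> nat}) :
  (expR (r * \sum_(k <- partial N) c k (Xcount s k)))%:E @[N --> \oo] -->
  expeR (r%:E * \esum_(k in M) (c k (Xcount s k))%:E)%E.
Proof.
apply: cvgn_expeR.
have -> : (fun N => (r * \sum_(k <- partial N) c k (Xcount s k))%:E) =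
          (fun N => r%:E * \sum_(0 <= k < N | k \in M) (c k (Xcount s k))%:E)%E.
  by apply: boolp.funext => N; rewrite EFinM sumEFin /partial big_filter /index_iota subn0.
apply: cvgeZl => //.
have -> : (\esum_(k in M) (c k (Xcount s k))%:E = \sum_(k <oo | k \in M) (c k (Xcount s k))%:E)%E.
  by rewrite nneseries_esum ?set_mem_set // => k _; rewrite lee_fin mulr_ge0.
by apply: is_cvg_nneseries_cond => k _ _; rewrite lee_fin mulr_ge0.
Qed.

Lemma En_exp_count_le :
  (En p (fun s : {ffun 'I_n -> nat} =>
     expeR (r%:E * \esum_(k in M) (w k * (b (Xcount s k))%:R)%:E))
   <= prod_over M (fun k => binom_mean (p k) n (fun x => expR (r * (w k * (b x)%:R)))))%E.
Proof.
rewrite /En /prod_over; apply: (@esum_le_limn _ _ _ (fun N s => (sample_prob p s)%:E *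
  (expR (r * \sum_(k <- partial N) c k (Xcount s k)))%:E)%E).
- by move=> N s; rewrite mule_ge0 ?lee_fin ?expR_ge0 ?sample_prob_ge0.
- by move=> s; apply: cvgeZl => //; exact: partial_cvg.
- apply: (cvgn_prod_cond (fun k => binom_mean (p k) n (f k)) (fun k => k \in M)) => [k|].
    by apply: binom_mean_ge0 (pk01 k) _ => x; exact: expR_ge0.
  have [r_ge0|r_lt0] := leP 0 r; [left|right] => k.
  + rewrite -{1}(binom_mean_cst (p k) n 1); apply: binom_mean_le (pk01 k) _ => x.
    by rewrite -expR0 ler_expR mulr_ge0 ?mulr_ge0.
  + rewrite -[X in _ <= X](binom_mean_cst (p k) n 1); apply: binom_mean_le (pk01 k) _ => x.
    by rewrite -expR0 ler_expR mulr_le0_ge0 ?mulr_ge0 // ltW.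
- exact: En_partial_le.
Qed.

End ExpCountBound.

Lemma En_exp_count_leq_le {R : realType} (p : nat -> R) (M : set nat) (n j : nat) (r : R)
    (w : nat -> R) :
  (forall k, 0 <= p k) -> (\esum_(k in [set: nat]) (p k)%:E = 1)%E -> (forall k, 0 <= w k) ->
  (En p (fun s : {ffun 'I_n -> nat} =>
     expeR (r%:E * \esum_(k in M) (w k * (Xcount s k <= j)%:R)%:E))
   <= prod_over M (fun k => (expR (r * w k) - 1) *
        (\sum_(l < j.+1) 'C(n, l)%:R * p k ^+ l * (1 - p k) ^+ (n - l)) + 1)%R)%E.
Proof.
move=> p_ge0 p_sum1 w_ge0.
have -> : prod_over M (fun k => (expR (r * w k) - 1) *
      (\sum_(l < j.+1) 'C(n, l)%:R * p k ^+ l * (1 - p k) ^+ (n - l)) + 1) =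
    prod_over M (fun k => binom_mean (p k) n (fun x => expR (r * (w k * (x <= j)%:R)))).
  congr prod_over; apply: boolp.funext => k.
  rewrite (@eq_binom_mean _ (p k) n _ (fun x => expR (r * w k * (x <= j)%:R))) => [|x].
    by rewrite binom_mean_exp_ind binom_mean_leq.
  by rewrite mulrA.
exact: (En_exp_count_le p p_ge0 p_sum1 M n r w (fun x => x <= j)%N w_ge0 (fun x => @ltnW x j)).
Qed.

Lemma sum_delta {R : realType} n (s : {ffun 'I_n -> nat}) k J :
  \sum_(l < J) @delta R n s k l = (Xcount s k < J)%:R.
Proof.
rewrite (eq_bigr (fun l : 'I_J => if (l == Xcount s k :> nat) then 1 else 0)) => [|l _].
  by rewrite -big_mkcond (big_ord1_eq _ (fun=> 1)); case: ltnP.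
by rewrite /delta eq_sym; case: eqP.
Qed.

Theorem lemma3p5 (R : realType) (p : nat -> R) (M : set nat) (n : nat) :
  (forall k, 0 <= p k) ->
  (\esum_(k in [set: nat]) (p k)%:E)%E = 1%E ->
  (1 <= n)%N ->
  forall r : R,
    (En p (fun s : {ffun 'I_n -> nat} =>
       expeR (r%:E * \esum_(k in M) (p k * @delta R n s k 0)%:E))
     <= prod_over M (fun k => (expR (r * p k) - 1) * (1 - p k) ^+ n + 1)%R)%E
    /\
    (forall j : nat, (1 <= j)%N ->
      (En p (fun s : {ffun 'I_n -> nat} =>
         expeR (r%:E * \esum_(k in M) (\sum_(l < j.+1) @delta R n s k l)%:E))
       <= prod_over M (fun k => (expR r - 1) *
            (\sum_(l < j.+1) 'C(n, l)%:R * p k ^+ l * (1 - p k) ^+ (n - l)) + 1)%R)%E).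
Proof.
move=> p_ge0 p_sum1 _ r; split=> [|j _].
- have -> : (fun s : {ffun 'I_n -> nat} =>
      expeR (r%:E * \esum_(k in M) (p k * @delta R n s k 0)%:E)%E) =
      (fun s => expeR (r%:E * \esum_(k in M) (p k * (Xcount s k <= 0)%:R)%:E)%E).
    by apply: boolp.funext => s; congr (expeR (_ * _)); apply: eq_esum => k _; rewrite leqn0.
  have -> : prod_over M (fun k => (expR (r * p k) - 1) * (1 - p k) ^+ n + 1) =
      prod_over M (fun k => (expR (r * p k) - 1) *
        (\sum_(l < 1) 'C(n, l)%:R * p k ^+ l * (1 - p k) ^+ (n - l)) + 1).
    by congr prod_over; apply: boolp.funext => k; rewrite big_ord1 bin0 expr0 subn0 !mul1r.
  exact: En_exp_count_leq_le.
- have -> : (fun s : {ffun 'I_n -> nat} =>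
      expeR (r%:E * \esum_(k in M) (\sum_(l < j.+1) @delta R n s k l)%:E)%E) =
      (fun s => expeR (r%:E * \esum_(k in M) (1 * (Xcount s k <= j)%:R)%:E)%E).
    apply: boolp.funext => s; congr (expeR (_ * _)).
    by apply: eq_esum => k _; rewrite sum_delta mul1r.
  rewrite -[r in expR r - 1]mulr1.
  exact: (En_exp_count_leq_le _ _ _ _ _ (fun=> 1) p_ge0 p_sum1 (fun=> ler01)).
Qed.
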